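(* For each $k\in\{1,2\}$ there is an $\exists_k$-axiomatizable $\aleph_0$-categorical theory $T$ in a finite relational vocabulary such that $\mathrm{Mod}(T)$ is $\boldsymbol\Pi^0_{k+1}$-complete. Concretely: for $k=1$, the theory in one unary predicate $P$ saying that $P$ is infinite and coinfinite; for $k=2$, the theory in one binary relation $R$ saying $R$ is irreflexive and symmetric, every $x$ has at most one $y$ with $R(x,y)$, and there are infinitely many $x$ with $\exists y\,R(x,y)$ and infinitely many $x$ with $\neg\exists y\,R(x,y)$.
   Context: $\mathrm{Mod}(\tau)\subseteq 2^\omega$ is the Polish space of atomic diagrams of $\tau$-structures with universe $\omega$; $\mathrm{Mod}(T)$ is the subset of models of $T$. $\Gamma$-complete means in $\Gamma$ and every $\Gamma$ subset of $2^\omega$ continuously (Wadge) reduces to it. $\exists_k$-axiomatizable: axiomatized by prenex sentences with $k$ alternating quantifier blocks starting with $\exists$. *)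

From HB Require Import structures.
From mathcomp Require Import all_boot.
From mathcomp Require Import boolp classical_sets functions cardinality topology cantor.
Set Implicit Arguments.
Unset Strict Implicit.
Unset Printing Implicit Defensive.
Local Open Scope classical_set_scope.

Record vocab := Vocab { vsym : finType; varity : vsym -> nat }.

Inductive formula (L : vocab) : Type :=
| FFalse : formula L
| FEq : nat -> nat -> formula L
| FRel : forall s : vsym L, ('I_(varity s) -> nat) -> formula L
| FNot : formula L -> formula L
| FAnd : formula L -> formula L -> formula L
| FOr : formula L -> formula L -> formula L
| FImp : formula L -> formula L -> formula L
| FEx : nat -> formula L -> formula L
| FAll : nat -> formula L -> formula L.
Arguments FFalse {L}.

Record structure (L : vocab) := Structure {
  carrier :> Type;
  rel : forall s : vsym L, ('I_(varity s) -> carrier) -> Prop }.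

Definition upd {M : Type} (e : nat -> M) (x : nat) (a : M) : nat -> M :=
  fun y => if y == x then a else e y.

Fixpoint sat {L : vocab} (M : structure L) (e : nat -> M) (phi : formula L) : Prop :=
  match phi with
  | FFalse => False
  | FEq x y => e x = e y
  | FRel s args => @rel L M s (fun i => e (args i))
  | FNot p => ~ @sat L M e p
  | FAnd p q => @sat L M e p /\ @sat L M e q
  | FOr p q => @sat L M e p \/ @sat L M e q
  | FImp p q => @sat L M e p -> @sat L M e q
  | FEx x p => exists a : M, @sat L M (upd e x a) p
  | FAll x p => forall a : M, @sat L M (upd e x a) p
  end.

Fixpoint free {L : vocab} (phi : formula L) (x : nat) : Prop :=
  match phi with
  | FFalse => False
  | FEq y z => x = y \/ x = z
  | FRel s args => exists i, args i = x
  | FNot p => free p x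
  | FAnd p q | FOr p q | FImp p q => free p x \/ free q x
  | FEx y p | FAll y p => x <> y /\ free p x
  end.

Definition sentence {L : vocab} (phi : formula L) := forall x, ~ free phi x.

Fixpoint qfree {L : vocab} (phi : formula L) : Prop :=
  match phi with
  | FFalse | FEq _ _ | FRel _ _ => True
  | FNot p => qfree p
  | FAnd p q | FOr p q | FImp p q => qfree p /\ qfree q
  | FEx _ _ | FAll _ _ => False
  end.

(* prenex formula with k alternating (possibly empty) quantifier blocks,
   the first block existential iff ex = true *)
Fixpoint prenex {L : vocab} (ex : bool) (k : nat) (phi : formula L) : Prop :=
  match k with
  | 0 => qfree phi
  | k'.+1 => exists (xs : seq nat) (psi : formula L),
      phi = foldr (if ex then @FEx L else @FAll L) psi xs /\ prenex (~~ ex) k' psi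
  end.

Definition Ek {L : vocab} (k : nat) (phi : formula L) := prenex true k phi.

Definition theory (L : vocab) := set (formula L).

Definition models {L : vocab} (M : structure L) (T : theory L) :=
  forall phi, T phi -> forall e : nat -> M, @sat L M e phi.

Definition Ek_axiomatizable {L : vocab} (k : nat) (T : theory L) :=
  exists S : theory L, (forall phi, S phi -> sentence phi /\ Ek k phi) /\
    forall M : structure L, models M S <-> models M T.

Definition isomorphic {L : vocab} (M N : structure L) :=
  exists h : M -> N, bijective h /\
    forall s (a : 'I_(varity s) -> M), @rel L M s a <-> @rel L N s (h \o a).

Definition countably_infinite {L : vocab} (M : structure L) :=
  exists h : nat -> M, bijective h.

Definition aleph0_categorical {L : vocab} (T : theory L) :=
  (exists M : structure L, countably_infinite M /\ models M T) /\
  forall M N : structure L, countably_infinite M -> countably_infinite N ->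
    models M T -> models N T -> isomorphic M N.

Definition Th {L : vocab} (K : structure L -> Prop) : theory L :=
  [set phi | sentence phi /\ forall M, K M -> models M [set phi]].

(* atomic facts R(a_1..a_n) with parameters from omega *)
Definition diag_index (L : vocab) := {s : vsym L & 'I_(varity s) -> nat}.

(* Mod(L) = 2^(atomic facts), with the product (Cantor) topology *)
Definition ModSpace (L : vocab) : topologicalType :=
  prod_topology (fun _ : diag_index L => bool).

Definition struct_of_diag {L : vocab} (x : ModSpace L) : structure L :=
  @Structure L nat (fun s a => x (existT _ s a) = true).

Definition Mod {L : vocab} (T : theory L) : set (ModSpace L) :=
  [set x | models (struct_of_diag x) T].

(* SigmaS n = Sigma^0_(n+1) *)
Fixpoint SigmaS {X : topologicalType} (n : nat) (A : set X) : Prop :=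
  match n with
  | 0 => open A
  | m.+1 => exists F : nat -> set X,
      (forall i, SigmaS m (~` F i)) /\ A = \bigcup_i F i
  end.

Definition Sigma0 {X : topologicalType} (n : nat) (A : set X) : Prop :=
  match n with 0 => False | m.+1 => SigmaS m A end.

Definition Pi0 {X : topologicalType} (n : nat) (A : set X) : Prop :=
  Sigma0 n (~` A).

Definition Pi0_complete {X : topologicalType} (n : nat) (A : set X) : Prop :=
  Pi0 n A /\
  forall B : set cantor_space, Pi0 n B ->
    exists f : cantor_space -> X, continuous f /\ B = f @^-1` A.

Definition L1 : vocab := @Vocab unit (fun _ => 1%N).
Definition P1 (M : structure L1) (m : M) : Prop := @rel _ M tt (fun _ => m).
Definition K1 (M : structure L1) : Prop :=
  infinite_set [set m | @P1 M m] /\ infinite_set [set m | ~ @P1 M m].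
Definition T1 : theory L1 := Th K1.

Definition L2 : vocab := @Vocab unit (fun _ => 2%N).
Definition R2 (M : structure L2) (x y : M) : Prop :=
  @rel _ M tt (fun i : 'I_2 => if val i == 0%N then x else y).
Definition K2 (M : structure L2) : Prop :=
  [/\ (forall x, ~ @R2 M x x),
      (forall x y, @R2 M x y -> @R2 M y x),
      (forall x y z, @R2 M x y -> @R2 M x z -> y = z),
      infinite_set [set x | exists y, @R2 M x y] &
      infinite_set [set x | ~ exists y, @R2 M x y]].
Definition T2 : theory L2 := Th K2.

From Pilot Require Import Defs.
From mathcomp Require Import all_boot.
From mathcomp Require Import boolp classical_sets functions cardinality topology cantor.
From mathcomp Require Import mathcomp_extra zify.
Set Implicit Arguments.
Unset Strict Implicit.
Unset Printing Implicit Defensive.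
Local Open Scope classical_set_scope.
Local Open Scope card_scope.

(* Each theory says that two definable parts of a model are infinite (for T2, the
   matched and the unmatched points of a partial matching), so a countable model is
   determined up to isomorphism, and the axioms "at least n points in each part" are
   ∃_1, resp. ∃_2.  Mod(T1) is a countable intersection of open sets, Mod(T2) a
   countable intersection of countable unions of closed sets.  For hardness, membership
   in ⋂_j U_j (U_j open) becomes "a locally constant counter jumps infinitely often",
   and the jumps are coded as P-points.  For a Π^0_3 set ⋂_i ¬⋂_j U_ij every row i
   jumps only finitely often; a matching gadget built continuously from the jumps
   leaves exactly one point unmatched for each row that is eventually quiet, so the
   gadget satisfies T2 iff every row is. *)

Definition cylinder (x : cantor_space) (n : nat) : set cantor_space :=
  [set y | forall m, (m < n)%N -> y m = x m].

Lemma cylinder_nbhs (x : cantor_space) n : nbhs x (cylinder x n).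
Proof.
elim: n => [|n IH].
  by apply: filterS (@filterT _ (nbhs x) _) => y _ m; rewrite ltn0.
have xn : nbhs x (proj n @^-1` [set x n] : set cantor_space).
  apply: open_nbhs_nbhs; split => //.
  by apply: open_comp; [move=> + _; exact: proj_continuous|exact: discrete_open].
apply: filterS (filterI IH xn) => y [yx yn] m.
by rewrite ltnS leq_eqVlt => /predU1P[->|]; [exact: yn|exact: yx].
Qed.

Lemma cylinder_le x n n' : (n <= n')%N -> cylinder x n' `<=` cylinder x n.
Proof. by move=> le y xy m mn; apply: xy; exact: leq_trans mn le. Qed.

Lemma cylinder_sym x n y : cylinder x n y -> cylinder y n = cylinder x n.
Proof.
by move=> xy; apply/seteqP; split => z yz m mn; rewrite yz // xy.
Qed.

Lemma nbhs_cylinder (x : cantor_space) (U : set cantor_space) :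
  nbhs x U -> exists n, cylinder x n `<=` U.
Proof.
pose F := filter_from [set: nat] (cylinder x).
have FF : Filter F.
  apply: filter_from_filter; first by exists 0%N.
  move=> i j _ _; exists (maxn i j) => //; rewrite subsetI.
  by split; apply: cylinder_le; [exact: leq_maxl|exact: leq_maxr].
have Fx : F --> (x : cantor_space).
  apply/cvg_sup => i A /= [V [[W oW <-] Wx] VA].
  by exists i.+1 => // y xy; apply: VA => /=; rewrite (xy i (ltnSn i)).
by move=> /Fx [n _ xU]; exists n.
Qed.

Definition locally_constant {T : Type} (f : cantor_space -> T) :=
  forall x, exists n, forall y, cylinder x n y -> f y = f x.

Lemma locally_constant_family (T : Type) (f : nat -> cantor_space -> T) N :
  (forall n, locally_constant (f n)) ->
  forall x, exists M, forall y, cylinder x M y ->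
    forall n, (n <= N)%N -> f n y = f n x.
Proof.
move=> fc x; elim: N => [|N [M fM]].
  have [M fM] := fc 0%N x; exists M => y xy n.
  by rewrite leqn0 => /eqP ->; exact: fM.
have [M' fM'] := fc N.+1 x; exists (maxn M M') => y xy n.
rewrite leq_eqVlt => /predU1P [->|].
  by apply: fM'; exact: cylinder_le (leq_maxr M M') _ xy.
by rewrite ltnS; apply: fM; exact: cylinder_le (leq_maxl M M') _ xy.
Qed.

Section ModSpaceTopology.
Variable L : vocab.

Lemma coord_nbhs (x : ModSpace L) (c : diag_index L) :
  nbhs x [set y : ModSpace L | y c = x c].
Proof.
apply: open_nbhs_nbhs; split => //.
have -> : [set y : ModSpace L | y c = x c] = proj c @^-1` [set x c] by [].
by apply: open_comp; [move=> + _; exact: proj_continuous|exact: discrete_open].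
Qed.

Lemma agree_nbhs (x : ModSpace L) (l : seq (diag_index L)) :
  nbhs x [set y : ModSpace L | forall c, List.In c l -> y c = x c].
Proof.
elim: l => [|c l IH]; first by apply: filterS (@filterT _ (nbhs x) _) => y _ c.
apply: filterS (filterI IH (coord_nbhs x c)) => y [yl yc] d /= [<-|] //.
exact: yl.
Qed.

Lemma open_finitely_supported (S : set (ModSpace L)) :
  (forall x, S x -> exists l : seq (diag_index L),
     forall y, (forall c, List.In c l -> y c = x c) -> S y) -> open S.
Proof.
move=> Sfin; rewrite openE => x Sx; have [l Sl] := Sfin x Sx.
exact: filterS (agree_nbhs x l).
Qed.

Lemma continuous_into_ModSpace (f : cantor_space -> ModSpace L) :
  (forall c, locally_constant (fun x => f x c)) -> continuous f.
Proof.
move=> fc x; apply/cvg_sup => c A /= [V [[W oW <-] Wx] VA].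
have [n fn] := fc c x.
by apply: filterS (cylinder_nbhs x n) => y /fn yx; apply: VA => /=; rewrite yx.
Qed.

End ModSpaceTopology.

Definition infinitely_often (P : nat -> Prop) :=
  forall N, exists n, (N <= n)%N /\ P n.

Lemma nondecreasing_unboundedE (lev : nat -> nat) :
  (forall n, (lev n <= lev n.+1)%N) ->
  (forall k, exists N, (k <= lev N)%N) <->
  infinitely_often (fun n => lev n.+1 != lev n).
Proof.
move=> mono; have levW : {homo lev : m n / (m <= n)%N} := homo_leq leqnn leq_trans mono.
split => [unb N|jumps]; last first.
  elim=> [|k [N kN]]; first by exists 0%N.
  have [n [Nn jn]] := jumps N; exists n.+1.
  by have := levW _ _ Nn; have := mono n; lia.
apply: contrapT => nojump.
have levN n : (N <= n)%N -> lev n = lev N.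
  move=> /subnK <-; elim: (n - N)%N => [|k IH]; first by rewrite add0n.
  apply/eqP; apply: contrapT => ne; apply: nojump; exists (k + N)%N.
  by split; [exact: leq_addl|rewrite -addSn IH; apply/eqP => E; rewrite E eqxx in ne].
have [M NM] := unb (lev N).+1.
case: (leqP N M) => [/levN|/ltnW/levW]; lia.
Qed.

Lemma mem_iota0 i n : (i \in iota 0 n) = (i < n)%N.
Proof. by rewrite mem_iota. Qed.

Lemma count_iota_ge (a : pred nat) k N : (k <= N)%N ->
  (forall i, (i < k)%N -> a i) -> (k <= count a (iota 0 N))%N.
Proof.
move=> /subnK <- ak; rewrite addnC iotaD count_cat add0n.
apply: leq_trans (leq_addr _ _).
have -> : count a (iota 0 k) = size (iota 0 k).
  by apply/eqP; rewrite -all_count; apply/allP => i; rewrite mem_iota0; exact: ak.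
by rewrite size_iota.
Qed.

Lemma count_iota_le (a : pred nat) j N :
  (forall i, a i -> (i < j)%N) -> (count a (iota 0 N) <= j)%N.
Proof.
move=> aj; suff : (count a (iota 0 N) <= minn N j)%N by lia.
elim: N => [|N IH] //; rewrite -addn1 iotaD count_cat add0n /=.
by case aN: (a N) => /=; [move: IH (aj _ aN)|move: IH]; lia.
Qed.

(* As the U_j are open, x lies in U_0 ∩ ... ∩ U_i iff some cylinder of x lies in it, so
   level x n is unbounded iff x lies in every U_j; the jump at n only depends on the
   first n+1 bits of x. *)
Section Pi02Jumps.
Variable U : nat -> set cantor_space.
Hypothesis oU : forall j, open (U j).

Definition prefix_cap (i : nat) : set cantor_space :=
  [set y | forall j, (j < i)%N -> U j y].

Definition level x n :=
  count (fun i => `[< cylinder x n `<=` prefix_cap i.+1 >]) (iota 0 n).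

Definition jump x n := level x n.+1 != level x n.

Lemma level_cylinder x n y : cylinder x n y -> level y n = level x n.
Proof. by move=> xy; rewrite /level (cylinder_sym xy). Qed.

Lemma jump_locally_constant n : locally_constant (jump^~ n).
Proof.
move=> x; exists n.+1 => y xy; rewrite /jump (level_cylinder xy).
by rewrite (level_cylinder (cylinder_le (leqnSn n) xy)).
Qed.

Lemma level_mono x n : (level x n <= level x n.+1)%N.
Proof.
rewrite /level -addn1 iotaD count_cat add0n; apply: leq_trans (leq_addr _ _).
apply: sub_count => i /asboolP xi; apply/asboolP.
by apply: subset_trans xi; apply: cylinder_le; rewrite addn1.
Qed.

Lemma open_prefix_cap i : open (prefix_cap i).
Proof.
elim: i => [|i IH].
  by rewrite (_ : prefix_cap 0 = setT); [exact: openT|apply/seteqP; split].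
rewrite (_ : prefix_cap i.+1 = prefix_cap i `&` U i); first exact: openI.
apply/seteqP; split => y.
  by move=> yi; split => [j ji|]; apply: yi => //; exact: ltnW.
by move=> [yi yU] j; rewrite ltnS leq_eqVlt => /predU1P[->|] //; exact: yi.
Qed.

Lemma level_unboundedP x :
  (forall j, U j x) <-> (forall k, exists n, (k <= level x n)%N).
Proof.
split => [xU k|unb j].
  have /nbhs_cylinder [n nk] : nbhs x (prefix_cap k).
    by apply: open_nbhs_nbhs; split; [exact: open_prefix_cap|move=> j _].
  exists (maxn n k); apply: count_iota_ge; first exact: leq_maxr.
  move=> i ik; apply/asboolP => y /(cylinder_le (leq_maxl n k)) /nk yk j ji.
  by apply: yk; lia.
apply: contrapT => xUj; have [n jn] := unb j.+1.
suff : (level x n <= j)%N by lia.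
apply: count_iota_le => i /asboolP xi; case: (ltnP i j) => // ji.
by exfalso; apply: xUj; apply: (xi x) => //; lia.
Qed.

Lemma Pi02_jumpP x : (forall j, U j x) <-> infinitely_often (jump x).
Proof.
by rewrite level_unboundedP; apply: nondecreasing_unboundedE; exact: level_mono.
Qed.

Lemma Pi02_jumpPn x :
  ~ (forall j, U j x) <-> exists N, forall n, (N <= n)%N -> ~~ jump x n.
Proof.
rewrite Pi02_jumpP; split => [noinf|[N nojump] inf].
  apply: contrapT => nN; apply: noinf => N; apply: contrapT => nn; apply: nN.
  by exists N => n Nn; apply/negP => jn; apply: nn; exists n.
by have [n [Nn jn]] := inf N; move: (nojump n Nn); rewrite jn.
Qed.

End Pi02Jumps.

Definition distinct_in {T : Type} (A : set T) n (g : nat -> T) :=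
  (forall i, (i < n)%N -> A (g i)) /\
  (forall i j, (i < n)%N -> (j < n)%N -> g i = g j -> i = j).

Lemma infinite_setP T (A : set T) :
  infinite_set A <-> forall n, exists g : nat -> T, distinct_in A n g.
Proof.
split => [Ainf|distinct [m Am]].
  elim=> [|n [g [gA ginj]]].
    have [a _] := infinite_setN0 Ainf.
    by exists (fun _ => a); split => [i|i j]; rewrite ltn0.
  have gfin : finite_set (g @` `I_n) by apply: finite_image.
  have [a [Aa ga]] := infinite_setN0 (infinite_setD Ainf gfin).
  exists (fun i => if i == n then a else g i); split.
    move=> i; rewrite ltnS leq_eqVlt => /predU1P[->|lt]; first by rewrite eqxx.
    by rewrite (ltn_eqF lt); exact: gA.
  move=> i j; rewrite !ltnS => iN jN.
  move: iN; rewrite leq_eqVlt => /predU1P[->|ilt];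
    move: jN; rewrite leq_eqVlt => /predU1P[->|jlt];
    rewrite ?eqxx ?(ltn_eqF ilt) ?(ltn_eqF jlt) //.
  - by move=> E; exfalso; apply: ga; exists j => //; rewrite E.
  - by move=> E; exfalso; apply: ga; exists i.
  - exact: ginj.
have [g [gA ginj]] := distinct m.+1.
have inj : {in `I_m.+1 &, injective g}.
  by move=> i j; rewrite !in_setE /= => iI jI; exact: ginj.
have le1 : g @` `I_m.+1 #<= A.
  by apply: subset_card_le => _ [i iI <-]; exact: gA.
have le2 : `I_m.+1 #<= A by rewrite -(card_le_eql (inj_card_eq inj)).
have : `I_m.+1 #<= `I_m by rewrite -(card_le_eqr Am).
by rewrite card_le_II ltnn.
Qed.

Lemma infinite_set_natP (A : set nat) : infinite_set A <-> infinitely_often A.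
Proof.
split => [Ainf N|Ainf].
  have [a [Aa Na]] := infinite_setN0 (infinite_setD Ainf (finite_II N)).
  by exists a; split => //; rewrite leqNgt; apply/negP => aN; exact: Na.
have [c cA] := choice Ainf.
pose fix g i := if i is i'.+1 then c (g i').+1 else c 0%N.
have gS i : (g i < g i.+1)%N by have [] := cA (g i).+1.
have gmono i j : (i < j)%N -> (g i < g j)%N.
  move=> /subnK <-; elim: (j - i.+1)%N => [|k IH]; first by rewrite add0n.
  exact: ltn_trans IH (gS _).
apply/infinite_setP => n; exists g; split.
  by case=> [|i] _ /=; [have [] := cA 0%N|have [] := cA (g i).+1].
move=> i j _ _ E; case: (ltngtP i j) => // ij.
  by have := gmono _ _ ij; rewrite E ltnn.
by have := gmono _ _ ij; rewrite E ltnn.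
Qed.

Lemma bijective_of_inj_surj {A B : Type} (f : A -> B) :
  injective f -> (forall y, exists x, f x = y) -> bijective f.
Proof.
move=> finj fsurj; have [g fg] := choice fsurj.
by exists g => [x|y]; [apply: finj; rewrite fg|exact: fg].
Qed.

Lemma infinite_subset_enum (M : Type) (h : nat -> M) (A : set M) :
  bijective h -> infinite_set A ->
  exists f : M -> nat, (forall x y, A x -> A y -> f x = f y -> x = y) /\
    (forall n, exists x, A x /\ f x = n).
Proof.
move=> [g hg gh] Ainf.
have cA : countable A.
  by apply/pcard_injP; exists g => x y _ _ E; rewrite -(gh x) -(gh y) E.
have /card_set_bijP [f [_ finj fsurj]] := eq_card_nat cA Ainf.
exists f; split; first by move=> x y Ax Ay; apply: finj; rewrite in_setE.
by move=> n; have [x Ax fx] := fsurj n I; exists x.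
Qed.

Lemma Pi0_2P (X : topologicalType) (B : set X) :
  Pi0 2 B <-> exists U : nat -> set X, (forall j, open (U j)) /\ B = \bigcap_j U j.
Proof.
split => [[F [oF BF]]|[U [oU ->]]].
  by exists (fun j => ~` F j); split => //; rewrite -[B]setCK BF setC_bigcup.
by exists (fun j => ~` U j); split => [j|]; [rewrite setCK; exact: oU|exact: setC_bigcap].
Qed.

Lemma Pi0_3P (X : topologicalType) (B : set X) :
  Pi0 3 B <-> exists U : nat -> nat -> set X, (forall i j, open (U i j)) /\
    B = \bigcap_i \bigcup_j ~` U i j.
Proof.
split => [[F [FS BF]]|[U [oU ->]]].
  have [G GF] := choice FS.
  exists (fun i j => ~` G i j); split => [i j|]; first exact: (proj1 (GF i)).
  rewrite -[B]setCK BF setC_bigcup; apply: eq_bigcapr => i _.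
  by rewrite (proj2 (GF i)); apply: eq_bigcupr => j _; rewrite setCK.
exists (fun i => ~` \bigcup_j ~` U i j); split; last by rewrite setC_bigcap.
move=> i; rewrite setCK; exists (fun j => ~` U i j).
by split => [j|]; [rewrite setCK; exact: oU|].
Qed.

Lemma Pi0_2_complete (X : topologicalType) (A : set X) : Pi0 2 A ->
  (forall U : nat -> set cantor_space, (forall j, open (U j)) ->
     exists f : cantor_space -> X, continuous f /\
       forall x, (forall j, U j x) <-> A (f x)) ->
  Pi0_complete 2 A.
Proof.
move=> A2 red; split => // B /Pi0_2P [U [oU ->]].
have [f [fc fA]] := red U oU; exists f; split => //.
apply/seteqP; split => x /= xU; first by apply/fA => j; exact: xU.
by move=> j _; apply/fA: j.
Qed.

Lemma Pi0_3_complete (X : topologicalType) (A : set X) : Pi0 3 A ->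
  (forall U : nat -> nat -> set cantor_space, (forall i j, open (U i j)) ->
     exists f : cantor_space -> X, continuous f /\
       forall x, (forall i, ~ forall j, U i j x) <-> A (f x)) ->
  Pi0_complete 3 A.
Proof.
move=> A3 red; split => // B /Pi0_3P [U [oU ->]].
have [f [fc fA]] := red U oU; exists f; split => //.
apply/seteqP; split => x /= xB.
  by apply/fA => i Ui; have [j _ /= nUij] := xB i I; exact: nUij.
move=> i _; apply: contrapT => nUi; apply: (proj2 (fA x) xB i) => j.
by apply: contrapT => nUij; apply: nUi; exists j.
Qed.

Section FirstOrder.
Variable L : vocab.

Definition FTrue : formula L := FImp FFalse FFalse.

Definition FBigAnd (s : seq nat) (f : nat -> formula L) : formula L :=
  foldr (fun i acc => FAnd (f i) acc) FTrue s.

Lemma sat_FBigAnd (M : structure L) (e : nat -> M) s f :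
  sat e (FBigAnd s f) <-> forall i, i \in s -> sat e (f i).
Proof.
elim: s => [|i s IH] /=; first by split => // _ [].
rewrite IH; split => [[fi fs] j|fs].
  by rewrite inE => /predU1P[->|] //; exact: fs.
by split => [|j js]; apply: fs; rewrite inE ?eqxx ?js ?orbT.
Qed.

Lemma free_FBigAnd s f x : free (FBigAnd s f) x -> exists2 i, i \in s & free (f i) x.
Proof.
elim: s => [|i s IH] /=; first by case.
case=> [fi|/IH [j js fj]]; first by exists i; rewrite ?inE ?eqxx.
by exists j; rewrite ?inE ?js ?orbT.
Qed.

Lemma qfree_FBigAnd s f : (forall i, qfree (f i)) -> qfree (FBigAnd s f).
Proof. by move=> fq; elim: s. Qed.

Definition override {M : Type} (e : nat -> M) (xs : seq nat) (g : nat -> M) :=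
  fun v => if v \in xs then g v else e v.

Lemma overrideE {M : Type} (e g : nat -> M) xs v :
  v \in xs -> override e xs g v = g v.
Proof. by rewrite /override => ->. Qed.

Lemma sat_FExs (M : structure L) (e : nat -> M) psi xs :
  sat e (foldr (@FEx L) psi xs) <-> exists g : nat -> M, sat (override e xs g) psi.
Proof.
elim: xs e => [|x xs IH] e /=; first by split => [?|[]//]; exists e.
have upd_override (g : nat -> M) a :
    override (upd e x a) xs g = override e (x :: xs) (override (fun=> a) xs g).
  apply: funext => v; rewrite /override /upd inE.
  by case: (v \in xs); [rewrite orbT|case: eqP].
split => [[a /IH [g xg]]|[g xg]].
  by exists (override (fun=> a) xs g); rewrite -upd_override.
exists (g x); apply/IH; exists g; move: xg; congr sat.
apply: funext => v; rewrite /override /upd inE.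
by case: (v \in xs); [rewrite orbT|case: eqP => [->|]].
Qed.

Lemma free_FExs psi xs x :
  free (foldr (@FEx L) psi xs) x -> x \notin xs /\ free psi x.
Proof.
elim: xs => [|y xs IH] //= [xy /IH [xs_x psi_x]]; split => //.
by rewrite inE negb_or xs_x andbT; apply/eqP.
Qed.

Definition FDistinct n : formula L :=
  FBigAnd (iota 0 n) (fun i => FBigAnd (iota 0 i) (fun j => FNot (@FEq L j i))).

Lemma sat_FDistinct (M : structure L) (e : nat -> M) n :
  sat e (FDistinct n) <-> forall i j, (i < n)%N -> (j < n)%N -> e i = e j -> i = j.
Proof.
rewrite sat_FBigAnd; split => [en i j iN jN eij|en i].
  have neq k l : (l < k)%N -> (k < n)%N -> e l <> e k.
    move=> lk kN; have := en k; rewrite mem_iota0 => /(_ kN) /sat_FBigAnd /(_ l).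
    by rewrite mem_iota0 => /(_ lk).
  case: (ltngtP i j) => // ij; exfalso; first exact: neq ij jN eij.
  exact: neq ij iN (esym eij).
rewrite mem_iota0 => iN; apply/sat_FBigAnd => j; rewrite mem_iota0 => ji /= eji.
have jN := ltn_trans ji iN.
by move: ji; rewrite (en _ _ jN iN eji) ltnn.
Qed.

Lemma free_FDistinct n x : free (FDistinct n) x -> (x < n)%N.
Proof.
move=> /free_FBigAnd [i]; rewrite mem_iota => iN /free_FBigAnd [j].
by rewrite mem_iota => ji /= [->|->] //; exact: ltn_trans ji iN.
Qed.

Lemma Th_sentence (K : structure L -> Prop) phi : Th K phi -> sentence phi.
Proof. by case. Qed.

Lemma axioms_Th (K : structure L -> Prop) (S : theory L) :
  (forall phi, S phi -> sentence phi) ->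
  (forall M : structure L, (nat -> M) -> models M S <-> K M) ->
  forall M : structure L, models M S <-> models M (Th K).
Proof.
move=> Ssent SK M; split => [MS phi [_ Kphi] e|MT phi Sphi e].
  by apply: (Kphi M _ phi erefl e); apply/(SK _ e).
apply: (MT phi _ e); split; first exact: Ssent.
by move=> N KN psi -> e'; apply: (proj2 (SK N e') KN).
Qed.

Lemma isomorphic_sym (M N : structure L) : isomorphic M N -> isomorphic N M.
Proof.
move=> [h [[g hg gh] hrel]]; exists g; split; first by exists h.
move=> s a; rewrite (hrel s (g \o a)).
by have -> : h \o (g \o a) = a by apply: funext => i /=; rewrite gh.
Qed.

Lemma isomorphic_trans (M N P : structure L) :
  isomorphic M N -> isomorphic N P -> isomorphic M P.
Proof.
move=> [h [hb hrel]] [k [kb krel]]; exists (k \o h).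
by split => [|s a]; [exact: bij_comp|rewrite hrel krel].
Qed.

Lemma aleph0_categorical_of_model (K : structure L -> Prop) (C : structure L) :
  (forall M : structure L, (nat -> M) -> models M (Th K) <-> K M) ->
  countably_infinite C -> K C ->
  (forall M, countably_infinite M -> K M -> isomorphic M C) ->
  aleph0_categorical (Th K).
Proof.
move=> ThK Cinf KC CM; split.
  by exists C; split => //; have [e _] := Cinf; apply/(ThK _ e).
move=> M N Minf Ninf /ThK MK /ThK NK; have [hM _] := Minf; have [hN _] := Ninf.
apply: isomorphic_trans (CM _ Minf (MK hM)) (isomorphic_sym (CM _ Ninf (NK hN))).
Qed.

End FirstOrder.

Definition P_atom (x : nat) : formula L1 := @FRel L1 tt (fun _ => x).

Definition P_literal (b : bool) x : formula L1 :=
  if b then P_atom x else FNot (P_atom x).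

Definition P_part (M : structure L1) (b : bool) : set M :=
  [set m | if b then P1 m else ~ P1 m].
Arguments P_part : clear implicits.

Definition FManyP (b : bool) n : formula L1 :=
  foldr (@FEx L1) (FAnd (FBigAnd (iota 0 n) (P_literal b)) (FDistinct L1 n))
    (iota 0 n).

Definition T1_axioms : theory L1 := [set phi | exists b n, phi = FManyP b n].

Lemma sat_FManyP (M : structure L1) (e : nat -> M) b n :
  sat e (FManyP b n) <-> exists g, distinct_in (P_part M b) n g.
Proof.
rewrite /FManyP sat_FExs; split => [[g [/sat_FBigAnd gP /sat_FDistinct gD]]|].
  exists (override e (iota 0 n) g); split => // i iN.
  by have := gP i; rewrite mem_iota0 => /(_ iN); case: b {gP}.
move=> [g [gP gD]]; exists g; split.
  apply/sat_FBigAnd => i; rewrite mem_iota0 => iN; have := gP i iN.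
  by case: b {gP} => /=; rewrite overrideE ?mem_iota0.
apply/(sat_FDistinct (override e (iota 0 n) g)) => i j iN jN.
by rewrite !overrideE ?mem_iota0 //; exact: gD.
Qed.

Lemma T1_axioms_E1 phi : T1_axioms phi -> sentence phi /\ Ek 1 phi.
Proof.
move=> [b [n ->]]; split.
  move=> x /free_FExs [+ /= []]; rewrite mem_iota0 => xn.
    move=> /free_FBigAnd [i]; rewrite mem_iota0 => iN.
    by case: b => /= [][k] /= ix; rewrite -ix iN in xn.
  by move=> /free_FDistinct; rewrite (negbTE xn).
exists (iota 0 n), (FAnd (FBigAnd (iota 0 n) (P_literal b)) (FDistinct L1 n)).
split => //=; split; first by apply: qfree_FBigAnd => i; case: b.
by apply: qfree_FBigAnd => i; apply: qfree_FBigAnd.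
Qed.

Lemma K1P (M : structure L1) : K1 M <-> forall b, infinite_set (P_part M b).
Proof. by split => [[? ?] []|MP] //; split; [exact: (MP true)|exact: (MP false)]. Qed.

Lemma models_T1_axioms (M : structure L1) : (nat -> M) -> models M T1_axioms <-> K1 M.
Proof.
move=> e; rewrite K1P; split => [MS b|MP phi [b [n ->]] e'].
  by apply/infinite_setP => n; apply/(sat_FManyP e); apply: MS; exists b, n.
by apply/sat_FManyP; have /infinite_setP := MP b; apply.
Qed.

Lemma T1_axiomsE (M : structure L1) : models M T1_axioms <-> models M T1.
Proof.
apply: axioms_Th M => [phi /T1_axioms_E1 []//|M e]; exact: models_T1_axioms.
Qed.

Lemma models_T1 (M : structure L1) : (nat -> M) -> models M T1 <-> K1 M.
Proof. by move=> e; rewrite -T1_axiomsE; exact: models_T1_axioms. Qed.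

Lemma T1_E1 : Ek_axiomatizable 1 T1.
Proof. by exists T1_axioms; split; [exact: T1_axioms_E1|exact: T1_axiomsE]. Qed.

Definition even_model : structure L1 :=
  @Structure L1 nat (fun _ a => ~~ odd (a ord0)).

Lemma K1_even_model : K1 even_model.
Proof.
apply/K1P => b; apply/infinite_set_natP => N.
case: b; [exists N.*2|exists N.*2.+1]; rewrite /P_part /P1 /= odd_double.
  by rewrite -addnn leq_addr.
by rewrite -addnn; split => //; apply: leq_trans (leq_addr _ _) (leqnSn _).
Qed.

Lemma rel_L1E (M : structure L1) (a : 'I_1 -> M) : @Defs.rel L1 M tt a <-> P1 (a ord0).
Proof.
by rewrite /P1; have -> // : a = (fun _ => a ord0) by apply: funext => i; rewrite (ord1 i).
Qed.

Lemma isomorphic_even_model (M : structure L1) :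
  countably_infinite M -> K1 M -> isomorphic M even_model.
Proof.
move=> [h hb] /K1P MP.
have [fP [fPi fPs]] := infinite_subset_enum hb (MP true).
have [fN [fNi fNs]] := infinite_subset_enum hb (MP false).
pose code (x : M) := if `[< P1 x >] then (fP x).*2 else (fN x).*2.+1.
have codeE x : ~~ odd (code x) = `[< P1 x >].
  by rewrite /code; case: asboolP => _; rewrite /= odd_double.
exists code; split; last first.
  by case=> a; rewrite rel_L1E /= codeE; split => [?|/asboolP //]; apply/asboolP.
apply: bijective_of_inj_surj.
  move=> x y; rewrite /code.
  case: (asboolP (P1 x)) => Px; case: (asboolP (P1 y)) => Py.
  - by move=> /double_inj; apply: fPi.
  - by move/(congr1 odd); rewrite /= !odd_double.
  - by move/(congr1 odd); rewrite /= !odd_double.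
  - by move=> [] /double_inj; apply: fNi.
move=> n; case On: (odd n).
  have [x [Nx fx]] := fNs n./2; exists x; rewrite /code.
  by case: asboolP => // _; rewrite fx -[RHS](odd_double_half n) On; lia.
have [x [Px fx]] := fPs n./2; exists x; rewrite /code.
by case: asboolP => // _; rewrite fx -[RHS](odd_double_half n) On; lia.
Qed.

Lemma T1_categorical : aleph0_categorical T1.
Proof.
apply: (aleph0_categorical_of_model models_T1 _ K1_even_model).
  by exists id; exists id.
exact: isomorphic_even_model.
Qed.

Definition P_coord (m : nat) : diag_index L1 := existT _ tt (fun _ => m).

Lemma Mod_T1E : Mod T1 = \bigcap_i
  [set x : ModSpace L1 | (exists m, (i <= m)%N /\ x (P_coord m) = true) /\
                         (exists m, (i <= m)%N /\ ~ x (P_coord m) = true)].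
Proof.
apply/seteqP; split => x.
  move=> /(@models_T1 (struct_of_diag x) id) /K1P xP i _.
  by split; [have /infinite_set_natP := xP true|have /infinite_set_natP := xP false].
move=> xP; apply/(@models_T1 (struct_of_diag x) id)/K1P => b; apply/infinite_set_natP => N.
by have [? ?] := xP N I; case: b.
Qed.

Lemma Pi0_2_Mod_T1 : Pi0 2 (Mod T1).
Proof.
apply/Pi0_2P; eexists; split; last exact: Mod_T1E.
move=> i; apply: open_finitely_supported => x [[m1 [i1 x1]] [m2 [i2 x2]]].
exists [:: P_coord m1; P_coord m2] => y yx.
by split; [exists m1|exists m2]; rewrite yx //=; auto.
Qed.

Definition T1_reduction (U : nat -> set cantor_space) (x : cantor_space) : ModSpace L1 :=
  fun d => let m := projT2 d ord0 in ~~ odd m && jump U x m./2.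

Lemma continuous_T1_reduction U : continuous (T1_reduction U).
Proof.
apply: continuous_into_ModSpace => d; rewrite /T1_reduction.
case: (odd _) => /=; last exact: jump_locally_constant.
by move=> x; exists 0%N.
Qed.

Lemma T1_reductionP U : (forall j, open (U j)) ->
  forall x, (forall j, U j x) <-> Mod T1 (T1_reduction U x).
Proof.
move=> oU x; rewrite Pi02_jumpP // /Mod /= (@models_T1 (struct_of_diag _) id) K1P; split.
  move=> jumps b; apply/infinite_set_natP => N; case: b.
    have [n [Nn jn]] := jumps N; exists n.*2; split.
      by rewrite -addnn; apply: leq_trans Nn (leq_addr _ _).
    by rewrite /P_part /P1 /T1_reduction /= odd_double doubleK.
  exists N.*2.+1; split; first by rewrite -addnn; apply: leq_trans (leq_addr _ _) (leqnSn _).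
  by rewrite /P_part /P1 /T1_reduction /= odd_double.
move=> xP N; have /infinite_set_natP /(_ N.*2) [m [Nm]] := xP true.
rewrite /P_part /P1 /T1_reduction /=; case Om: (odd m) => //= jm.
by exists m./2; split => //; rewrite -leq_double even_halfK ?Om.
Qed.

Lemma Pi0_complete_T1 : Pi0_complete 2 (Mod T1).
Proof.
apply: Pi0_2_complete; first exact: Pi0_2_Mod_T1.
move=> U oU; exists (T1_reduction U); split; first exact: continuous_T1_reduction.
exact: T1_reductionP.
Qed.

Definition R_atom (x y : nat) : formula L2 :=
  @FRel L2 tt (fun i : 'I_2 => if val i == 0%N then x else y).

Lemma sat_R_atom (M : structure L2) (e : nat -> M) x y :
  sat e (R_atom x y) <-> R2 (e x) (e y).
Proof.
rewrite /= /R2; suff -> : (fun i : 'I_2 => e (if val i == 0%N then x else y)) =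
  (fun i : 'I_2 => if val i == 0%N then e x else e y) by [].
by apply: funext => i; case: (val i == 0%N).
Qed.

Lemma rel_R_atom (M : structure L2) (e : nat -> M) x y :
  @Defs.rel L2 M tt (fun i : 'I_2 => e (if val i == 0%N then x else y)) <-> R2 (e x) (e y).
Proof. exact: sat_R_atom. Qed.

Lemma free_R_atom x y v : free (R_atom x y) v -> v = x \/ v = y.
Proof. by move=> [k]; case: (val k == 0%N) => <-; [left|right]. Qed.

Definition ax_irrefl : formula L2 := FAll 0 (FNot (R_atom 0 0)).
Definition ax_sym : formula L2 := FAll 0 (FAll 1 (FImp (R_atom 0 1) (R_atom 1 0))).
Definition ax_functional : formula L2 :=
  FAll 0 (FAll 1 (FAll 2 (FImp (R_atom 0 1) (FImp (R_atom 0 2) (@FEq L2 1 2))))).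

Definition many_matched_body n : formula L2 :=
  FAnd (FDistinct L2 n) (FBigAnd (iota 0 n) (fun i => R_atom i (n + i))).
Definition ax_many_matched n := foldr (@FEx L2) (many_matched_body n) (iota 0 (n + n)).

Definition many_unmatched_body n : formula L2 :=
  FAnd (FDistinct L2 n) (FBigAnd (iota 0 n) (fun i => FNot (R_atom i n))).
Definition ax_many_unmatched n :=
  foldr (@FEx L2) (FAll n (many_unmatched_body n)) (iota 0 n).

Definition T2_axioms : theory L2 :=
  [set phi | [\/ phi = ax_irrefl, phi = ax_sym, phi = ax_functional |
                 exists n, phi = ax_many_matched n \/ phi = ax_many_unmatched n]].

Definition matched (M : structure L2) : set M := [set x | exists y, R2 x y].
Definition unmatched (M : structure L2) : set M := [set x | ~ exists y, R2 x y].
Arguments matched : clear implicits.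
Arguments unmatched : clear implicits.

Lemma T2_axioms_E2 phi : T2_axioms phi -> sentence phi /\ Ek 2 phi.
Proof.
have qfree_D n : qfree (FDistinct L2 n).
  by apply: qfree_FBigAnd => i; apply: qfree_FBigAnd.
case=> [->|->|->|[n [->|->]]].
- split; first by move=> x /= [x0 /free_R_atom []]; lia.
  by exists [::], ax_irrefl; split => //; exists [:: 0%N], (FNot (R_atom 0 0)).
- split; first by move=> x /= [x0 [x1 [/free_R_atom [] | /free_R_atom []]]]; lia.
  exists [::], ax_sym; split => //.
  by exists [:: 0%N; 1%N], (FImp (R_atom 0 1) (R_atom 1 0)).
- split.
    by move=> x /= [x0 [x1 [x2 [/free_R_atom []|[/free_R_atom []|[]]]]]]; lia.
  exists [::], ax_functional; split => //.
  by exists [:: 0%N; 1%N; 2%N], (FImp (R_atom 0 1) (FImp (R_atom 0 2) (@FEq L2 1 2))).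
- split.
    move=> x /free_FExs []; rewrite mem_iota0 => xn /= [/free_FDistinct|]; first lia.
    by move=> /free_FBigAnd [i]; rewrite mem_iota0 => iN /free_R_atom []; lia.
  exists (iota 0 (n + n)), (many_matched_body n); split => //.
  by exists [::], (many_matched_body n); split => //; split => //; exact: qfree_FBigAnd.
- split.
    move=> x /free_FExs []; rewrite mem_iota0 => xn /= [xnn [/free_FDistinct|]].
      lia.
    by move=> /free_FBigAnd [i]; rewrite mem_iota0 => iN /free_R_atom []; lia.
  exists (iota 0 n), (FAll n (many_unmatched_body n)); split => //.
  by exists [:: n], (many_unmatched_body n); split => //; split => //; exact: qfree_FBigAnd.
Qed.

Section T2Semantics.
Variable M : structure L2.

Lemma sat_ax_irrefl (e : nat -> M) : sat e ax_irrefl <-> forall a : M, ~ R2 a a.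
Proof. by split => Mi a; have /= := Mi a; rewrite rel_R_atom. Qed.

Lemma sat_ax_sym (e : nat -> M) : sat e ax_sym <-> forall a b : M, R2 a b -> R2 b a.
Proof. by split => Ms a b; have /= := Ms a b; rewrite !rel_R_atom. Qed.

Lemma sat_ax_functional (e : nat -> M) :
  sat e ax_functional <-> forall a b c : M, R2 a b -> R2 a c -> b = c.
Proof. by split => Mf a b c; have /= := Mf a b c; rewrite !rel_R_atom. Qed.

Lemma sat_ax_many_matched (e : nat -> M) n : sat e (ax_many_matched n) <->
  exists g : nat -> M, (forall i j, (i < n)%N -> (j < n)%N -> g i = g j -> i = j) /\
    (forall i, (i < n)%N -> R2 (g i) (g (n + i))).
Proof.
rewrite /ax_many_matched sat_FExs; split => [[g [/sat_FDistinct gD /sat_FBigAnd gR]]|].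
  exists (override e (iota 0 (n + n)) g); split => // i iN.
  by have := gR i; rewrite mem_iota0 => /(_ iN) /sat_R_atom.
move=> [g [gD gR]]; exists g; split.
  by apply/sat_FDistinct => i j iN jN; rewrite !overrideE ?mem_iota0; [exact: gD|lia|lia].
apply/sat_FBigAnd => i; rewrite mem_iota0 => iN.
by rewrite sat_R_atom !overrideE ?mem_iota0; [exact: gR|lia|lia].
Qed.

Lemma sat_ax_many_unmatched (e : nat -> M) n : sat e (ax_many_unmatched n) <->
  exists g : nat -> M, forall a : M,
    (forall i j, (i < n)%N -> (j < n)%N -> g i = g j -> i = j) /\
    (forall i, (i < n)%N -> ~ R2 (g i) a).
Proof.
have updE g a i : (i < n)%N -> upd (override e (iota 0 n) g) n a i = g i.
  by move=> iN; rewrite /upd (ltn_eqF iN) overrideE ?mem_iota0.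
have updn g a : upd (override e (iota 0 n) g) n a n = a by rewrite /upd eqxx.
rewrite /ax_many_unmatched sat_FExs; split => [[g ga]|[g ga]]; exists g => a.
  have [/sat_FDistinct gD /sat_FBigAnd gR] := ga a; split.
    by move=> i j iN jN; rewrite -(updE g a i iN) -(updE g a j jN); exact: gD.
  move=> i iN; have := gR i; rewrite mem_iota0 => /(_ iN) /=.
  by rewrite rel_R_atom updE // updn.
have [gD gR] := ga a; split.
  by apply/sat_FDistinct => i j iN jN; rewrite (updE g a i iN) (updE g a j jN); exact: gD.
apply/sat_FBigAnd => i; rewrite mem_iota0 => iN /=.
by rewrite rel_R_atom updE // updn; exact: gR.
Qed.

Lemma models_T2_axioms (e : nat -> M) : models M T2_axioms <-> K2 M.
Proof.
split => [MS|[Mi Ms Mf Mm Mu] phi [->|->|->|[n [->|->]]] e'].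
- split.
  + by apply/(sat_ax_irrefl e); apply: MS; constructor 1.
  + by apply/(sat_ax_sym e); apply: MS; constructor 2.
  + by apply/(sat_ax_functional e); apply: MS; constructor 3.
  + apply/infinite_setP => n.
    have /sat_ax_many_matched [g [gD gR]] : sat e (ax_many_matched n).
      by apply: MS; constructor 4; exists n; left.
    by exists g; split => // i iN; exists (g (n + i)); exact: gR.
  + apply/infinite_setP => n.
    have /sat_ax_many_unmatched [g gu] : sat e (ax_many_unmatched n).
      by apply: MS; constructor 4; exists n; right.
    exists g; split; last exact: (proj1 (gu (e 0%N))).
    by move=> i iN [y gy]; exact: (proj2 (gu y) i iN).
- exact/sat_ax_irrefl.
- exact/sat_ax_sym.
- exact/sat_ax_functional.
- have [g [gm gD]] := proj1 (infinite_setP _) Mm n.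
  have gp i : exists y, (i < n)%N -> R2 (g i) y.
    case: (ltnP i n) => iN; last by exists (e 0%N).
    by have [y gy] := gm i iN; exists y.
  have [p {}gp] := choice gp.
  apply/sat_ax_many_matched; exists (fun v => if (v < n)%N then g v else p (v - n)%N).
  split => [i j iN jN|i iN]; first by rewrite iN jN; exact: gD.
  by rewrite iN ifF ?addKn; [exact: gp|lia].
- have [g [gu gD]] := proj1 (infinite_setP _) Mu n.
  by apply/sat_ax_many_unmatched; exists g => a; split => // i iN gia; apply: (gu i iN); exists a.
Qed.

End T2Semantics.

Lemma T2_axiomsE (M : structure L2) : models M T2_axioms <-> models M T2.
Proof.
apply: axioms_Th M => [phi /T2_axioms_E2 []//|M e]; exact: models_T2_axioms.
Qed.

Lemma models_T2 (M : structure L2) : (nat -> M) -> models M T2 <-> K2 M.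
Proof. by move=> e; rewrite -T2_axiomsE; exact: models_T2_axioms. Qed.

Lemma T2_E2 : Ek_axiomatizable 2 T2.
Proof. by exists T2_axioms; split; [exact: T2_axioms_E2|exact: T2_axiomsE]. Qed.

(* 3n is unmatched, and 3n+1, 3n+2 are matched to each other. *)
Definition pair_rel (a b : nat) : bool :=
  ((a %% 3 == 1) && (b == a.+1)) || ((a %% 3 == 2) && (b.+1 == a)).

Definition pair_model : structure L2 :=
  @Structure L2 nat (fun _ a => pair_rel (a ord0) (a ord_max)).

Lemma rel_L2E (M : structure L2) (a : 'I_2 -> M) :
  @Defs.rel L2 M tt a <-> R2 (a ord0) (a ord_max).
Proof.
rewrite /R2; suff -> : a = (fun i : 'I_2 => if val i == 0%N then a ord0 else a ord_max) by [].
by apply: funext => -[[|[|k]] ik] //=; congr a; apply: val_inj.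
Qed.

Lemma K2_pair_model : K2 pair_model.
Proof.
rewrite /K2 /R2 /=; split => [x|x y|x y z||]; rewrite /pair_rel; try lia.
  apply/infinite_set_natP => N; exists (3 * N).+1; split; first lia.
  by exists (3 * N).+2; rewrite /pair_rel; lia.
apply/infinite_set_natP => N; exists (3 * N); split; first lia.
by move=> [y]; rewrite /pair_rel; lia.
Qed.

Section MatchingIsomorphism.
Variable M : structure L2.
Hypothesis Mirr : forall x : M, ~ R2 x x.
Hypothesis Msym : forall x y : M, R2 x y -> R2 y x.
Hypothesis Mfun : forall x y z : M, R2 x y -> R2 x z -> y = z.
Variable rank : M -> nat.
Hypothesis rank_inj : injective rank.
Variable partner : M -> M.
Hypothesis partnerP : forall x, matched M x -> R2 x (partner x).

Lemma partner_eq x y : R2 x y -> partner x = y.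
Proof. by move=> xy; apply: Mfun (partnerP (ex_intro _ y xy)) xy. Qed.

Lemma partnerK x : matched M x -> partner (partner x) = x.
Proof. by move=> mx; apply: partner_eq; apply: Msym; exact: partnerP. Qed.

Lemma matched_partner x : matched M x -> matched M (partner x).
Proof. by move=> mx; exists x; apply: Msym; exact: partnerP. Qed.

(* Orienting each edge by rank, the edges are enumerated by their left ends. *)
Definition left_end : set M := [set x | matched M x /\ (rank x < rank (partner x))%N].

Lemma left_end_partner x : matched M x -> ~ left_end x -> left_end (partner x).
Proof.
move=> mx xl; split; first exact: matched_partner.
rewrite partnerK //; case: (ltngtP (rank x) (rank (partner x))) => // [lt|/rank_inj E].
  by exfalso; exact: xl.
by have := partnerP mx; rewrite -E => /Mirr.
Qed.

Lemma partner_left_end x : left_end x -> ~ left_end (partner x).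
Proof. by move=> [mx lt] [_]; rewrite partnerK //; move: lt; lia. Qed.

Lemma infinite_left_end : infinite_set (matched M) -> infinite_set left_end.
Proof.
move=> minf lfin; apply: minf.
apply: (@sub_finite_set _ _ (left_end `|` partner @` left_end)); last first.
  by rewrite finite_setU; split => //; exact: finite_image.
move=> x mx; case: (pselect (left_end x)) => xl; first by left.
by right; exists (partner x); [exact: left_end_partner|exact: partnerK].
Qed.

Variables enumU enumL : M -> nat.
Hypothesis enumU_inj :
  forall x y, unmatched M x -> unmatched M y -> enumU x = enumU y -> x = y.
Hypothesis enumU_surj : forall n, exists x, unmatched M x /\ enumU x = n.
Hypothesis enumL_inj :
  forall x y, left_end x -> left_end y -> enumL x = enumL y -> x = y.
Hypothesis enumL_surj : forall n, exists x, left_end x /\ enumL x = n.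

Definition pair_code (x : M) : nat :=
  if `[< matched M x >] then
    if `[< left_end x >] then (3 * enumL x + 1)%N else (3 * enumL (partner x) + 2)%N
  else (3 * enumU x)%N.

Lemma pair_code_unmatched x : unmatched M x -> pair_code x = (3 * enumU x)%N.
Proof. by move=> ux; rewrite /pair_code asboolF. Qed.

Lemma pair_code_left_end x : left_end x -> pair_code x = (3 * enumL x + 1)%N.
Proof. by move=> lx; rewrite /pair_code !asboolT //; case: lx. Qed.

Lemma pair_code_right_end x :
  matched M x -> ~ left_end x -> pair_code x = (3 * enumL (partner x) + 2)%N.
Proof. by move=> mx nlx; rewrite /pair_code asboolT // asboolF. Qed.

Lemma pair_codeP x : [\/ unmatched M x /\ pair_code x = (3 * enumU x)%N,
    left_end x /\ pair_code x = (3 * enumL x + 1)%N |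
    [/\ matched M x, ~ left_end x & pair_code x = (3 * enumL (partner x) + 2)%N]].
Proof.
case: (pselect (matched M x)) => [mx|ux]; last by constructor 1; rewrite pair_code_unmatched.
case: (pselect (left_end x)) => [lx|nlx]; first by constructor 2; rewrite pair_code_left_end.
by constructor 3; rewrite ?pair_code_right_end.
Qed.

Lemma pair_code_inj : injective pair_code.
Proof.
move=> x y; case: (pair_codeP x) => [[ux ->]|[lx ->]|[mx nlx ->]];
  case: (pair_codeP y) => [[uy ->]|[ly ->]|[my nly ->]] E; try lia.
- by apply: enumU_inj => //; lia.
- by apply: enumL_inj => //; lia.
- rewrite -(partnerK mx) -(partnerK my); congr partner.
  by apply: enumL_inj; [exact: left_end_partner|exact: left_end_partner|lia].
Qed.

Lemma pair_code_surj n : exists x, pair_code x = n.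
Proof.
have := divn_eq n 3; have := ltn_pmod n (isT : (0 < 3)%N).
case: (n %% 3)%N => [|[|[|r]]] // _ ->.
- have [x [ux <-]] := enumU_surj (n %/ 3)%N.
  by exists x; rewrite pair_code_unmatched //; lia.
- have [x [lx <-]] := enumL_surj (n %/ 3)%N.
  by exists x; rewrite pair_code_left_end //; lia.
- have [x [lx <-]] := enumL_surj (n %/ 3)%N; exists (partner x).
  have mx := proj1 lx.
  rewrite pair_code_right_end ?partnerK //; [lia|exact: matched_partner|].
  exact: partner_left_end.
Qed.

Lemma R2_pair_code x y : R2 x y <-> pair_rel (pair_code x) (pair_code y).
Proof.
split => [xy|].
  have mx : matched M x by exists y.
  have <- := partner_eq xy.
  have my := matched_partner mx.
  case: (pselect (left_end x)) => [lx|nlx].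
    have nly := partner_left_end lx.
    case: (pair_codeP x) => [[]|[_ ->]|[]] //.
    case: (pair_codeP (partner x)) => [[]|[]|[_ _ ->]] //.
    by rewrite partnerK // /pair_rel; lia.
  have ly := left_end_partner mx nlx.
  case: (pair_codeP x) => [[]|[]|[_ _ ->]] //.
  by case: (pair_codeP (partner x)) => [[]|[_ ->]|[]] //; rewrite /pair_rel; lia.
case: (pair_codeP x) => [[ux ->]|[lx ->]|[mx nlx ->]];
  case: (pair_codeP y) => [[uy ->]|[ly ->]|[my nly ->]]; rewrite /pair_rel; try lia.
- move=> E; have <- : partner y = x.
    by apply: enumL_inj; [exact: left_end_partner|exact: lx|lia].
  by apply: Msym; exact: partnerP.
- move=> E; have -> : y = partner x.
    by apply: enumL_inj; [exact: ly|exact: left_end_partner|lia].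
  exact: partnerP.
Qed.

End MatchingIsomorphism.

Lemma isomorphic_pair_model (M : structure L2) :
  countably_infinite M -> K2 M -> isomorphic M pair_model.
Proof.
move=> [h hb] [Mirr Msym Mfun Mm Mu]; have [rank _ rankK] := hb.
have rank_inj := can_inj rankK.
have px x : exists y, matched M x -> R2 x y.
  by case: (pselect (matched M x)) => [[y xy]|nmx]; [exists y|exists x].
have [partner partnerP] := choice px.
have [enumU [enumU_inj enumU_surj]] := infinite_subset_enum hb Mu.
have [enumL [enumL_inj enumL_surj]] := infinite_subset_enum hb
  (infinite_left_end Mirr Msym Mfun rank_inj partnerP Mm).
exists (pair_code rank partner enumU enumL); split.
  by apply: bijective_of_inj_surj; [apply: pair_code_inj|apply: pair_code_surj].
by case=> a; rewrite rel_L2E; apply: R2_pair_code.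
Qed.

Lemma T2_categorical : aleph0_categorical T2.
Proof.
apply: (aleph0_categorical_of_model models_T2 _ K2_pair_model).
  by exists id; exists id.
exact: isomorphic_pair_model.
Qed.

Lemma nat2_bijection : exists p : (nat * nat -> nat) * (nat -> nat * nat),
  cancel p.1 p.2 /\ cancel p.2 p.1.
Proof.
have /card_set_bijP [f [_ finj fsurj]] := card_nat2.
have [g fg gf] : bijective f.
  apply: bijective_of_inj_surj; first by move=> x y; apply: finj; rewrite in_setE.
  by move=> y; have [x _ <-] := fsurj y I; exists x.
by exists (f, g).
Qed.

Definition pairn : nat * nat -> nat := (projT1 (cid nat2_bijection)).1.
Definition unpairn : nat -> nat * nat := (projT1 (cid nat2_bijection)).2.
Lemma pairnK : cancel pairn unpairn. Proof. exact: (proj1 (projT2 (cid nat2_bijection))). Qed.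
Lemma unpairnK : cancel unpairn pairn. Proof. exact: (proj2 (projT2 (cid nat2_bijection))). Qed.

Inductive vertex := Anchor of nat | Link of nat & nat & bool.

Definition vertex_code (v : vertex) : nat :=
  match v with
  | Anchor a => a.*2
  | Link a k b => (b + (pairn (a, k)).*2).*2.+1
  end.

Definition code_vertex (n : nat) : vertex :=
  if odd n then Link (unpairn (n./2)./2).1 (unpairn (n./2)./2).2 (odd n./2)
  else Anchor n./2.

Lemma vertex_codeK : cancel vertex_code code_vertex.
Proof.
case=> [a|a k b]; rewrite /code_vertex /=; first by rewrite odd_double doubleK.
rewrite odd_double uphalf_double half_bit_double pairnK oddD odd_double addbF.
by case: b.
Qed.

Lemma code_vertexK : cancel code_vertex vertex_code.
Proof.
move=> n; rewrite /code_vertex; case On: (odd n) => /=.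
  rewrite -surjective_pairing unpairnK odd_double_half.
  by rewrite -[RHS](odd_double_half n) On.
by rewrite -[RHS](odd_double_half n) On.
Qed.

(* The anchor a = pairn (i, t) guesses that t is where the final all-false tail of
   row i of h starts; it is activated at stage k once the guess is refuted by time
   t + k.  Links are always matched: Link a k false -- Link a k true before activation,
   Link a k true -- Link a k.+1 false afterwards, which frees Link a k false at the
   first activation stage k to be matched with the anchor.  Hence the unmatched
   vertices are the anchors of correct guesses, one for each eventually false row. *)
Section Gadget.
Variable h : nat -> nat -> bool.

Definition activated (a k : nat) : bool :=
  ((0 < (unpairn a).2)%N && ~~ h (unpairn a).1 (unpairn a).2.-1) ||
  has (fun k' => h (unpairn a).1 ((unpairn a).2 + k')) (iota 0 k.+1).

Lemma activated_le a k k' : (k <= k')%N -> activated a k -> activated a k'.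
Proof.
move=> /subnK <-; elim: (k' - k)%N => [|n IH] ak; first by rewrite add0n.
move: (IH ak); rewrite addSn /activated => /orP [->//|ank]; apply/orP; right.
by rewrite -addn1 iotaD has_cat ank.
Qed.

Definition first_activation a k := activated a k && ((k == 0%N) || ~~ activated a k.-1).

Lemma first_activation_uniq a k k' :
  first_activation a k -> first_activation a k' -> k = k'.
Proof.
move=> /andP [ak fk] /andP [ak' fk'].
case: (ltngtP k k') => // lt; exfalso.
- by move: fk'; case: k' ak' lt => [|k'] //= _ lt /negP; apply; apply: activated_le ak.
- by move: fk; case: k ak lt => [|k] //= _ lt /negP; apply; apply: activated_le ak'.
Qed.

Lemma exists_first_activation a k : activated a k -> exists k', first_activation a k'.
Proof.
elim: k => [|k IH] ak; first by exists 0%N; rewrite /first_activation ak.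
case ak': (activated a k); first exact: IH.
by exists k.+1; rewrite /first_activation ak /= ak'.
Qed.

Definition gadget_arc (v w : vertex) : bool :=
  match v, w with
  | Anchor a, Link a' k b => ~~ b && (a' == a) && first_activation a k
  | Link a k b, Link a' k' b' => ~~ b && b' && (a' == a) &&
       (((k' == k) && ~~ activated a k) || ((k == k'.+1) && activated a k'))
  | _, _ => false
  end.

Definition gadget_adj v w := gadget_arc v w || gadget_arc w v.

Lemma gadget_adjC v w : gadget_adj v w = gadget_adj w v.
Proof. by rewrite /gadget_adj orbC. Qed.

Lemma gadget_adj_irr v : ~~ gadget_adj v v.
Proof. by rewrite /gadget_adj orbb; case: v => [a|a k []] /=; rewrite ?andbF. Qed.

Lemma adj_anchor a w :
  gadget_adj (Anchor a) w <-> exists k, w = Link a k false /\ first_activation a k.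
Proof.
rewrite /gadget_adj; case: w => [a'|a' k' b'] /=; first by split => // -[k []].
rewrite orbF; split; first by case: b' => //= /andP [/eqP -> fa]; exists k'.
by move=> [k [[-> -> ->] fa]]; rewrite eqxx.
Qed.

Lemma adj_link_false a k w : gadget_adj (Link a k false) w <->
  [\/ w = Anchor a /\ first_activation a k, w = Link a k true /\ ~~ activated a k |
      exists k', k = k'.+1 /\ w = Link a k' true /\ activated a k'].
Proof.
rewrite /gadget_adj; case: w => [a'|a' k' b'] /=.
  split; first by move=> /andP [/eqP <- fa]; constructor 1.
  by case=> [[[->] fa]|[]|[? [_ []]]] //; rewrite eqxx.
case: b'; rewrite /= ?andbF ?andFb ?orbF; last by split => // -[[]|[]|[? [_ []]]].
split.
  move=> /andP [/eqP ->] /orP [/andP [/eqP -> nak]|/andP [/eqP -> ak]].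
    by constructor 2.
  by constructor 3; exists k'.
case=> [[]//|[[-> ->] nak]|[k0 [-> [[-> ->] ak]]]]; rewrite eqxx /=.
  by rewrite eqxx nak.
by rewrite eqxx ak orbT.
Qed.

Lemma adj_link_true a k w : gadget_adj (Link a k true) w <->
  (w = Link a k false /\ ~~ activated a k) \/ (w = Link a k.+1 false /\ activated a k).
Proof.
rewrite /gadget_adj; case: w => [a'|a' k' b'] /=; first by split => // -[[]|[]].
case: b' => /=; rewrite ?andbF ?orbF /=; first by split => // -[[]|[]].
split.
  by move=> /andP [/eqP ->] /orP [/andP [/eqP -> nak]|/andP [/eqP -> ak]]; [left|right].
case=> [[[-> ->] nak]|[[-> ->] ak]]; rewrite eqxx /=; first by rewrite eqxx nak.
by rewrite eqxx ak orbT.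
Qed.

Lemma adj_link_trueE a k w : gadget_adj (Link a k true) w ->
  w = if activated a k then Link a k.+1 false else Link a k false.
Proof. by case/adj_link_true => [[-> /negbTE ->]|[-> ->]]. Qed.

Lemma adj_link_falseE a k w : gadget_adj (Link a k false) w ->
  w = if ~~ activated a k then Link a k true
      else if first_activation a k then Anchor a else Link a k.-1 true.
Proof.
case/adj_link_false => [[-> fa]|[-> nak]|[k' [-> [-> ak']]]].
- by rewrite fa; case/andP: fa => ->.
- by rewrite nak.
have ak : activated a k'.+1 by apply: activated_le ak'.
by rewrite ak /first_activation ak /= ak'.
Qed.

Lemma gadget_adj_functional v w w' : gadget_adj v w -> gadget_adj v w' -> w = w'.
Proof.
case: v => [a|a k []].
- move=> /adj_anchor [k [-> f1]] /adj_anchor [k' [-> f2]].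
  by rewrite (first_activation_uniq f1 f2).
- by move=> /adj_link_trueE -> /adj_link_trueE ->.
- by move=> /adj_link_falseE -> /adj_link_falseE ->.
Qed.

Lemma link_matched a k b : exists w, gadget_adj (Link a k b) w.
Proof.
case: b.
  case ak: (activated a k); [exists (Link a k.+1 false)|exists (Link a k false)].
    by apply/adj_link_true; right.
  by apply/adj_link_true; left; rewrite ak.
case ak: (activated a k).
  case fa: ((k == 0%N) || ~~ activated a k.-1).
    by exists (Anchor a); apply/adj_link_false; constructor 1; rewrite /first_activation ak fa.
  move: fa; case: k ak => [|k] //= ak /negbFE ak'.
  by exists (Link a k true); apply/adj_link_false; constructor 3; exists k.
by exists (Link a k true); apply/adj_link_false; constructor 2; rewrite ak.
Qed.

Lemma anchor_matched a : (exists w, gadget_adj (Anchor a) w) <-> exists k, activated a k.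
Proof.
split; first by move=> [w /adj_anchor [k [_ /andP [ak _]]]]; exists k.
move=> [k /exists_first_activation [k' fa]].
by exists (Link a k' false); apply/adj_anchor; exists k'.
Qed.

Definition never_activated a := forall k, ~~ activated a k.

Definition eventually_false i := exists T, forall s, (T <= s)%N -> ~~ h i s.

Lemma never_activatedP i t : never_activated (pairn (i, t)) <->
  ((t == 0%N) || h i t.-1) /\ (forall s, (t <= s)%N -> ~~ h i s).
Proof.
rewrite /never_activated /activated pairnK; split => [na|[start tail] k].
  split; first by have := na 0%N; rewrite negb_or negb_and negbK -eqn0Ngt => /andP [].
  move=> s ts; have := na (s - t)%N; rewrite negb_or => /andP [_].
  move=> /hasPn /(_ (s - t)%N); rewrite mem_iota0 ltnSn subnKC //.
  by move=> /(_ isT).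
rewrite negb_or negb_and negbK -eqn0Ngt start andTb.
by apply/hasPn => k' _; apply: tail; exact: leq_addr.
Qed.

Lemma never_activated_uniq i t t' :
  never_activated (pairn (i, t)) -> never_activated (pairn (i, t')) -> t = t'.
Proof.
move=> /never_activatedP [st tl] /never_activatedP [st' tl'].
case: (ltngtP t t') => // lt; exfalso.
- by move: st'; case: t' lt {tl'} => //= t' lt; rewrite (negbTE (tl t' _)) // -ltnS.
- by move: st; case: t lt {tl} => //= t lt; rewrite (negbTE (tl' t _)) // -ltnS.
Qed.

Lemma eventually_falseP i : eventually_false i <-> exists t, never_activated (pairn (i, t)).
Proof.
split => [[T]|[t /never_activatedP [_ tl]]]; last by exists t.
elim: T => [|T IH] tl; first by exists 0%N; apply/never_activatedP; split.
case hT: (h i T); last first.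
  by apply: IH => s; rewrite leq_eqVlt => /predU1P [<-|]; [rewrite hT|exact: tl].
by exists T.+1; apply/never_activatedP; split => //; rewrite hT orbT.
Qed.

Definition gadget_model : structure L2 :=
  @Structure L2 nat (fun _ a => gadget_adj (code_vertex (a ord0)) (code_vertex (a ord_max))).

Lemma R2_gadget_model m y : @R2 gadget_model m y <-> gadget_adj (code_vertex m) (code_vertex y).
Proof. by []. Qed.

Lemma unmatched_gadgetP m : unmatched gadget_model m <->
  exists a, code_vertex m = Anchor a /\ never_activated a.
Proof.
split => [um|[a [ma na]] [y]].
  case E: (code_vertex m) => [a|a k b].
    exists a; split => // k; apply/negP => ak; apply: um.
    have [w aw] := proj2 (anchor_matched a) (ex_intro _ k ak).
    by exists (vertex_code w); rewrite R2_gadget_model vertex_codeK E.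
  by have [w lw] := link_matched a k b; exfalso; apply: um; exists (vertex_code w);
    rewrite R2_gadget_model vertex_codeK E.
rewrite R2_gadget_model ma => ay.
have [k ak] := proj1 (anchor_matched a) (ex_intro _ (code_vertex y) ay).
by move: (na k); rewrite ak.
Qed.

Lemma infinite_matched_gadget : infinite_set (matched gadget_model).
Proof.
apply/infinite_setP => n; exists (fun k => vertex_code (Link 0 k false)); split.
  move=> i _; have [w lw] := link_matched 0 i false.
  by exists (vertex_code w); rewrite R2_gadget_model !vertex_codeK.
by move=> i j _ _ /(can_inj vertex_codeK) [].
Qed.

Lemma infinite_unmatched_gadget :
  (forall i, eventually_false i) -> infinite_set (unmatched gadget_model).
Proof.
move=> evf; have [t tP] := choice (fun i => proj1 (eventually_falseP i) (evf i)).
apply/infinite_setP => n; exists (fun i => vertex_code (Anchor (pairn (i, t i)))); split.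
  by move=> i _; apply/unmatched_gadgetP; exists (pairn (i, t i)); rewrite vertex_codeK.
by move=> i j _ _ /(can_inj vertex_codeK) [] /(can_inj pairnK) [].
Qed.

Hypothesis h_mono : forall i n, h i n -> h i.+1 n.

Lemma eventually_false_le i j : (i <= j)%N -> eventually_false j -> eventually_false i.
Proof.
move=> /subnK <-; elim: (j - i)%N => [|k IH]; first by rewrite add0n.
by move=> [T hT]; apply: IH; exists T => s /hT; apply: contra; exact: h_mono.
Qed.

(* If row i0 is not eventually false, every unmatched vertex codes an anchor
   pairn (i, t i) with i < i0, t i being the only correct guess for row i. *)
Lemma finite_unmatched_gadget i0 :
  ~ eventually_false i0 -> finite_set (unmatched gadget_model).
Proof.
move=> nevf.
have tP i : exists t, (exists t', never_activated (pairn (i, t'))) ->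
    never_activated (pairn (i, t)).
  by case: (pselect (exists t', never_activated (pairn (i, t')))) => [[t ?]|nt];
    [exists t|exists 0%N].
have [t {}tP] := choice tP.
apply: (@sub_finite_set _ _ ((fun i => vertex_code (Anchor (pairn (i, t i)))) @` `I_i0));
  last exact: finite_image.
move=> m /unmatched_gadgetP [a [ma na]].
have na' : never_activated (pairn ((unpairn a).1, (unpairn a).2)).
  by rewrite -surjective_pairing unpairnK.
exists (unpairn a).1.
  rewrite /=; case: (ltnP (unpairn a).1 i0) => // le; exfalso; apply: nevf.
  by apply: eventually_false_le le _; apply/eventually_falseP; exists (unpairn a).2.
rewrite -(never_activated_uniq na' (tP _ (ex_intro _ (unpairn a).2 na'))).
by rewrite -surjective_pairing unpairnK -ma code_vertexK.
Qed.

Lemma K2_gadget_model : K2 gadget_model <-> forall i, eventually_false i.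
Proof.
split => [[_ _ _ _ uinf] i|evf].
  by apply: contrapT => nevf; exact: uinf (finite_unmatched_gadget nevf).
split => [m|m y|m y z||].
- exact/negP/gadget_adj_irr.
- by rewrite !R2_gadget_model gadget_adjC.
- by move=> my mz; apply: (can_inj code_vertexK); exact: gadget_adj_functional my mz.
- exact: infinite_matched_gadget.
- exact: infinite_unmatched_gadget.
Qed.

End Gadget.

Definition agree_upto (h h' : nat -> nat -> bool) I N :=
  forall i n, (i <= I)%N -> (n <= N)%N -> h i n = h' i n.

Definition finitely_determined (F : (nat -> nat -> bool) -> bool) :=
  exists I N, forall h h', agree_upto h h' I N -> F h = F h'.

Lemma finitely_determined_const b : finitely_determined (fun _ => b).
Proof. by exists 0%N, 0%N. Qed.

Lemma finitely_determined_op2 (op : bool -> bool -> bool) F G :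
  finitely_determined F -> finitely_determined G ->
  finitely_determined (fun h => op (F h) (G h)).
Proof.
move=> [I [N FIN]] [I' [N' GIN]]; exists (maxn I I'), (maxn N N') => h h' hh'.
rewrite (FIN h h') ?(GIN h h') // => i n iI nN; apply: hh'; lia.
Qed.

Lemma finitely_determined_neg F :
  finitely_determined F -> finitely_determined (fun h => ~~ F h).
Proof. by move=> [I [N FIN]]; exists I, N => h h' /FIN ->. Qed.

Lemma finitely_determined_activated a k :
  finitely_determined (fun h => activated h a k).
Proof.
exists (unpairn a).1, ((unpairn a).2 + k)%N => h h' hh'; rewrite /activated.
rewrite hh' //; last by apply: leq_trans (leq_pred _) (leq_addr _ _).
congr orb; apply: eq_in_has => k'; rewrite mem_iota0 ltnS => k'k.
by rewrite hh' // leq_add2l.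
Qed.

Lemma finitely_determined_gadget_adj v w :
  finitely_determined (fun h => gadget_adj h v w).
Proof.
have arc v' w' : finitely_determined (fun h => gadget_arc h v' w').
  case: v' => [a|a k b]; case: w' => [a'|a' k' b'] /=;
    rewrite /first_activation;
    repeat first [apply: finitely_determined_const | apply: finitely_determined_activated |
      apply: finitely_determined_neg | apply: (finitely_determined_op2 andb) |
      apply: (finitely_determined_op2 orb)].
exact: (finitely_determined_op2 orb).
Qed.

Lemma locally_constant_finitely_determined
    (H : cantor_space -> nat -> nat -> bool) F :
  (forall i n, locally_constant (fun x => H x i n)) -> finitely_determined F ->
  locally_constant (fun x => F (H x)).
Proof.
move=> Hc [I [N FIN]] x.
pose row i x n := if (n <= N)%N then H x i n else false.
have rowc i : locally_constant (row i).
  move=> z; have [M HM] := locally_constant_family N (fun n => Hc i n) z.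
  exists M => y zy; apply: funext => n; rewrite /row; case: ifP => // nN.
  exact: HM.
have [M rowM] := locally_constant_family I rowc x.
exists M => y xy; apply: FIN => i n iI nN.
by have := congr1 (fun f => f n) (rowM y xy i iI); rewrite /row nN.
Qed.

Section Pi03Reduction.
Variable U : nat -> nat -> set cantor_space.
Hypothesis oU : forall i j, open (U i j).

Definition jump_upto (x : cantor_space) (i n : nat) : bool :=
  has (fun i' => jump (U i') x n) (iota 0 i.+1).

Lemma jump_upto_mono x i n : jump_upto x i n -> jump_upto x i.+1 n.
Proof. by rewrite /jump_upto -(addn1 i.+1) iotaD has_cat => ->. Qed.

Lemma jump_upto_locally_constant i n : locally_constant (fun x => jump_upto x i n).
Proof.
move=> x; have [M HM] := locally_constant_family i (fun i' => jump_locally_constant (U i') n) x.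
exists M => y xy; apply: eq_in_has => i'; rewrite mem_iota0 ltnS => i'i.
exact: HM.
Qed.

Lemma eventually_false_jump_upto x :
  (forall i, eventually_false (jump_upto x) i) <-> (forall i, ~ forall j, U i j x).
Proof.
have -> : (forall i, ~ forall j, U i j x) <->
    forall i, exists N, forall n, (N <= n)%N -> ~~ jump (U i) x n.
  by split => nU i; apply/Pi02_jumpPn => //; exact: nU.
split => [evf i|nojump].
  have [T hT] := evf i; exists T => n /hT; apply: contra => jn.
  by apply/hasP; exists i => //; rewrite mem_iota0 ltnSn.
elim=> [|i [T hT]].
  have [N jN] := nojump 0%N; exists N => n /jN.
  by rewrite /jump_upto /= orbF.
have [N jN] := nojump i.+1; exists (maxn T N) => n.
rewrite geq_max => /andP [Tn Nn].
by rewrite /jump_upto -(addn1 i.+1) iotaD has_cat negb_or hT //= orbF jN.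
Qed.

(* The atomic diagram of gadget_model (jump_upto x); T2_reductionP uses that
   struct_of_diag (T2_reduction x) is convertible to that model. *)
Definition T2_reduction (x : cantor_space) : ModSpace L2 :=
  fun d => gadget_adj (jump_upto x) (code_vertex (projT2 d ord0))
                                      (code_vertex (projT2 d ord_max)).

Lemma continuous_T2_reduction : continuous T2_reduction.
Proof.
apply: continuous_into_ModSpace => d.
apply: (locally_constant_finitely_determined (H := jump_upto)
  (F := fun h => gadget_adj h _ _)); first exact: jump_upto_locally_constant.
exact: finitely_determined_gadget_adj.
Qed.

Lemma T2_reductionP x :
  (forall i, ~ forall j, U i j x) <-> Mod T2 (T2_reduction x).
Proof.
rewrite -eventually_false_jump_upto -(K2_gadget_model (@jump_upto_mono x)).
exact: iff_sym (@models_T2 (gadget_model (jump_upto x)) id).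
Qed.

End Pi03Reduction.

Definition R_coord (m y : nat) : diag_index L2 :=
  existT _ tt (fun i : 'I_2 => if val i == 0%N then m else y).

Definition diag_R (x : ModSpace L2) m y := x (R_coord m y) = true.

Definition graph_diag : set (ModSpace L2) :=
  [set x | [/\ forall m, ~ diag_R x m m, forall m y, diag_R x m y -> diag_R x y m &
     forall m y z, diag_R x m y -> diag_R x m z -> y = z]].

Definition matched_after (i m y : nat) : set (ModSpace L2) :=
  [set x | (i <= m)%N /\ diag_R x m y].

Definition unmatched_after (i m : nat) : set (ModSpace L2) :=
  [set x | (i <= m)%N /\ forall z, ~ diag_R x m z].

Lemma open_not_graph_diag : open (~` graph_diag).
Proof.
apply: open_finitely_supported => x ngx.
have [irr|] := pselect (forall m, ~ diag_R x m m); last first.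
  move=> /existsNP [m /contrapT xmm]; exists [:: R_coord m m] => x' x'x [x'irr _ _].
  by apply: (x'irr m); rewrite /diag_R x'x //=; left.
have [sym|] := pselect (forall m y, diag_R x m y -> diag_R x y m); last first.
  move=> /existsNP [m /existsNP [y /not_implyP [xmy nxym]]].
  exists [:: R_coord m y; R_coord y m] => x' x'x [_ x'sym _]; apply: nxym.
  rewrite /diag_R -x'x /=; last by right; left.
  by apply: x'sym; rewrite /diag_R x'x //=; left.
have [fn|] := pselect (forall m y z, diag_R x m y -> diag_R x m z -> y = z).
  by exfalso; apply: ngx.
move=> /existsNP [m /existsNP [y /existsNP [z /not_implyP [xmy /not_implyP [xmz yz]]]]].
exists [:: R_coord m y; R_coord m z] => x' x'x [_ _ x'fun]; apply: yz; apply: (x'fun m).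
  by rewrite /diag_R x'x //=; left.
by rewrite /diag_R x'x //=; right; left.
Qed.

Lemma open_not_matched_after i m y : open (~` matched_after i m y).
Proof.
apply: open_finitely_supported => x nx.
case: (leqP i m) => im; last by exists [::] => x' _ []; rewrite leqNgt im.
exists [:: R_coord m y] => x' x'x [_ x'my]; apply: nx; split => //.
by rewrite /diag_R -x'x //=; left.
Qed.

Lemma open_not_unmatched_after i m : open (~` unmatched_after i m).
Proof.
apply: open_finitely_supported => x nx.
case: (leqP i m) => im; last by exists [::] => x' _ []; rewrite leqNgt im.
have [z xmz] : exists z, diag_R x m z.
  by apply: contrapT => nz; apply: nx; split => // z xmz; apply: nz; exists z.
exists [:: R_coord m z] => x' x'x [_ x'm].
by apply: (x'm z); rewrite /diag_R x'x //=; left.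
Qed.

Definition T2_witness i m y m' :=
  graph_diag `&` matched_after i m y `&` unmatched_after i m'.

Lemma open_not_T2_witness i m y m' : open (~` T2_witness i m y m').
Proof.
rewrite /T2_witness 2!setCI; apply: openU; last exact: open_not_unmatched_after.
by apply: openU; [exact: open_not_graph_diag|exact: open_not_matched_after].
Qed.

Definition T2_witness_at i j :=
  let: (m, j') := unpairn j in let: (y, m') := unpairn j' in T2_witness i m y m'.

Lemma Mod_T2E : Mod T2 = \bigcap_i \bigcup_j T2_witness_at i j.
Proof.
apply/seteqP; split => x.
  move=> /(@models_T2 (struct_of_diag x) id) [irr sym fn minf uinf] i _.
  have [m [im [y xmy]]] := proj1 (infinite_set_natP _) minf i.
  have [m' [im' xm']] := proj1 (infinite_set_natP _) uinf i.
  exists (pairn (m, pairn (y, m'))) => //; rewrite /T2_witness_at !pairnK.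
  split; first by split; split.
  by split => // z xm'z; apply: xm'; exists z.
move=> xW; apply/(@models_T2 (struct_of_diag x) id).
have xW' i : exists m y m', T2_witness i m y m' x.
  have [j _] := xW i I; rewrite /T2_witness_at.
  by case: (unpairn j) => m j'; case: (unpairn j') => y m' ?; exists m, y, m'.
have [? [? [? [[[irr sym fn] _] _]]]] := xW' 0%N; split => //.
- apply/infinite_set_natP => N; have [m [y [? [[_ [Nm xm]] _]]]] := xW' N.
  by exists m; split => //; exists y.
- apply/infinite_set_natP => N; have [? [? [m' [_ [Nm' xm']]]]] := xW' N.
  by exists m'; split => // -[z xz]; exact: xm' z xz.
Qed.

Lemma Pi0_3_Mod_T2 : Pi0 3 (Mod T2).
Proof.
apply/Pi0_3P; exists (fun i j => ~` T2_witness_at i j); split => [i j|].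
  by rewrite /T2_witness_at; case: (unpairn j) => m j'; case: (unpairn j') => y m';
    exact: open_not_T2_witness.
by rewrite Mod_T2E; apply: eq_bigcapr => i _; apply: eq_bigcupr => j _; rewrite setCK.
Qed.

Lemma Pi0_complete_T2 : Pi0_complete 3 (Mod T2).
Proof.
apply: Pi0_3_complete; first exact: Pi0_3_Mod_T2.
move=> U oU; exists (T2_reduction U); split; first exact: continuous_T2_reduction.
exact: T2_reductionP.
Qed.

Theorem mainTheorem12 :
  (forall k : nat, (k = 1 \/ k = 2)%N ->
     exists (L : vocab) (T : theory L),
       (forall phi, T phi -> sentence phi) /\
       Ek_axiomatizable k T /\ aleph0_categorical T /\ Pi0_complete k.+1 (Mod T))
  /\
  (Ek_axiomatizable 1 T1 /\ aleph0_categorical T1 /\ Pi0_complete 2 (Mod T1))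
  /\
  (Ek_axiomatizable 2 T2 /\ aleph0_categorical T2 /\ Pi0_complete 3 (Mod T2)).
Proof.
have T1P : Ek_axiomatizable 1 T1 /\ aleph0_categorical T1 /\ Pi0_complete 2 (Mod T1).
  by split; [exact: T1_E1|split; [exact: T1_categorical|exact: Pi0_complete_T1]].
have T2P : Ek_axiomatizable 2 T2 /\ aleph0_categorical T2 /\ Pi0_complete 3 (Mod T2).
  by split; [exact: T2_E2|split; [exact: T2_categorical|exact: Pi0_complete_T2]].
split => [k [->|->]|]; last by split.
  by exists L1, T1; split => //; exact: Th_sentence.
by exists L2, T2; split => //; exact: Th_sentence.
Qed.
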